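(* For any affine subspace $L$ as below, the set of minimal elements of $L\cap\Delta^{n-1}_+$ with respect to the Markov order $\succ_{P^*}$ coincides with the set of minimal elements of $L\cap\Delta^{n-1}_+$ with respect to the relation $>_{H,P^*}$. (Here $P^0$ is minimal for a relation $R$ if there is no $P^1\in L\cap\Delta^{n-1}_+$, $P^1\ne P^0$, with $P^0\,R\,P^1$.)
   Context: Fix $n\ge 2$ and a positive equilibrium distribution $P^*=(p^*_i)$, $p^*_i>0$, $\sum_i p^*_i=1$. Let $\Delta^{n-1}_+=\{P\in\mathbb{R}^n: p_i>0,\ \sum_i p_i=1\}$. A Markov chain with equilibrium $P^*$ is given by rate constants $q_{ij}\ge 0$ ($i\neq j$) satisfying $\sum_{j\ne i}q_{ij}p^*_j=\bigl(\sum_{j\ne i}q_{ji}\bigr)p^*_i$ for all $i$, with Kolmogorov equation $\frac{dp_i}{dt}=\sum_{j\ne i}(q_{ij}p_j-q_{ji}p_i)$. $P^0\succ^0_{P^*}P^1$ if for some such chain the solution with $P(0)=P^0$ has $P(1)=P^1$; the Markov order $\succ_{P^*}$ is the closed transitive closure of $\succ^0_{P^*}$. For a convex function $h$ on $[0,\infty)$ (or $(0,\infty)$), the $f$-divergence is $H_h(P\|P^* )=\sum_i p^*_i h(p_i/p^*_i)$. $P^0>_{H,P^*}P^1$ means $H_h(P^0\|P^* )>H_h(P^1\|P^* )$ for all strictly convex functions $h$. The condition manifold is $L=\{P:\ \sum_j m_{rj}p_j=M_r,\ r=0,\dots,k\}$ with $m_{0j}=1$, $M_0=1$, and $L\cap\Delta^{n-1}_+\ne\emptyset$.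 *)

From Stdlib Require Import Reals Lra Lia.
Open Scope R_scope.

(* Vectors in R^n are functions nat -> R; only coordinates i < n matter. *)

Fixpoint rsum (n : nat) (f : nat -> R) : R :=
  match n with
  | O => 0
  | S k => rsum k f + f k
  end.

Definition rsum_ne (n i : nat) (f : nat -> R) : R :=
  rsum n (fun j => if Nat.eqb j i then 0 else f j).

Definition veq (n : nat) (P Q : nat -> R) : Prop :=
  forall i, (i < n)%nat -> P i = Q i.

Definition in_pos_simplex (n : nat) (P : nat -> R) : Prop :=
  (forall i, (i < n)%nat -> 0 < P i) /\ rsum n P = 1.

(* rate constants q i j (i <> j) of a Markov chain with equilibrium Ps:
   q i j >= 0 and  sum_{j<>i} q_ij p*_j = (sum_{j<>i} q_ji) p*_i. *)
Definition markov_chain (n : nat) (Ps : nat -> R) (q : nat -> nat -> R) : Prop :=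
  (forall i j, (i < n)%nat -> (j < n)%nat -> i <> j -> 0 <= q i j) /\
  (forall i, (i < n)%nat ->
     rsum_ne n i (fun j => q i j * Ps j) = rsum_ne n i (fun j => q j i) * Ps i).

Definition kolmogorov_solution (n : nat) (q : nat -> nat -> R) (X : R -> nat -> R) : Prop :=
  forall i, (i < n)%nat -> forall t,
    derivable_pt_lim (fun s => X s i) t
      (rsum_ne n i (fun j => q i j * X t j - q j i * X t i)).

Definition markov_step (n : nat) (Ps P0 P1 : nat -> R) : Prop :=
  exists q, markov_chain n Ps q /\
    exists X, kolmogorov_solution n q X /\ veq n (X 0) P0 /\ veq n (X 1) P1.

Definition rel_transitive (Rl : (nat -> R) -> (nat -> R) -> Prop) : Prop :=
  forall a b c, Rl a b -> Rl b c -> Rl a c.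

Definition rel_closed (n : nat) (Rl : (nat -> R) -> (nat -> R) -> Prop) : Prop :=
  forall (a b : nat -> nat -> R) (x y : nat -> R),
    (forall k, Rl (a k) (b k)) ->
    (forall i, (i < n)%nat -> Un_cv (fun k => a k i) (x i)) ->
    (forall i, (i < n)%nat -> Un_cv (fun k => b k i) (y i)) ->
    in_pos_simplex n x -> in_pos_simplex n y ->
    Rl x y.

(* Markov order: the closed transitive closure of markov_step on Delta_+,
   i.e. the smallest closed transitive relation on Delta_+ containing it. *)
Definition markov_order (n : nat) (Ps P0 P1 : nat -> R) : Prop :=
  in_pos_simplex n P0 /\ in_pos_simplex n P1 /\
  forall Rl : (nat -> R) -> (nat -> R) -> Prop,
    (forall a b, in_pos_simplex n a -> in_pos_simplex n b ->
                 markov_step n Ps a b -> Rl a b) ->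
    rel_transitive Rl -> rel_closed n Rl -> Rl P0 P1.

Definition strictly_convex_pos (h : R -> R) : Prop :=
  forall x y t, 0 < x -> 0 < y -> x <> y -> 0 < t < 1 ->
    h (t * x + (1 - t) * y) < t * h x + (1 - t) * h y.

Definition f_div (n : nat) (h : R -> R) (P Ps : nat -> R) : R :=
  rsum n (fun i => Ps i * h (P i / Ps i)).

Definition H_order (n : nat) (Ps P0 P1 : nat -> R) : Prop :=
  forall h, strictly_convex_pos h -> f_div n h P0 Ps > f_div n h P1 Ps.

Definition in_L (n k : nat) (m : nat -> nat -> R) (M : nat -> R) (P : nat -> R) : Prop :=
  forall r, (r <= k)%nat -> rsum n (fun j => m r j * P j) = M r.

Definition minimal_in (n : nat) (S : (nat -> R) -> Prop)
    (Rl : (nat -> R) -> (nat -> R) -> Prop) (P0 : nat -> R) : Prop :=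
  S P0 /\ ~ (exists P1, S P1 /\ ~ veq n P1 P0 /\ Rl P0 P1).

(** It follows
    from two comparison results between the orders.

    (A) Markov order decreases every f-divergence.  For a convex
        piecewise-linear [h] (a maximum of affine functions), [P] |-> H_h(P||Ps)
        is a Lyapunov function of every Kolmogorov equation with equilibrium
        [Ps]; a one-sided creeping argument turns the nonpositive right
        derivative into monotonicity on [0,1].  Being continuous, this
        monotonicity survives the closed transitive closure, and a strictly
        convex [h] agrees with such a maximum of supporting lines at the
        finitely many points that matter.

    (B) Divergence order yields Markov order towards the target.  Testing
        [H_order] with hinge functions [max(0, y - t)] shows that no
        "upper set" of states (w.r.t. the ratios [P0 i / Ps i]) gains mass.
        Such a transport problem decomposes into finitely many elementary
        transfers of mass from a state of larger ratio to one of smaller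
        ratio, and a
        small multiple of each transfer is realised by an explicit two-state
        Markov chain.  Hence [P0] is Markov-above [P0 + e (P1 - P0)] for some
        [0 < e <= 1].

    Minimality then transfers along convex combinations: by (B) and
    convexity in one direction, by (A) applied to the midpoint of [P0] and
    [P1] in the other. *)

From Stdlib Require Import Reals Lra Lia List Classical FunctionalExtensionality Bool.
From Coquelicot Require Import Coquelicot.
Open Scope R_scope.

Lemma rsum_ext n f g : (forall i, (i < n)%nat -> f i = g i) -> rsum n f = rsum n g.
Proof.
  induction n; simpl; intros H; auto.
  rewrite IHn by (intros; apply H; lia). rewrite H by lia. reflexivity.
Qed.

Lemma rsum_plus n f g : rsum n (fun i => f i + g i) = rsum n f + rsum n g.
Proof. induction n; simpl; [lra | rewrite IHn; lra]. Qed.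

Lemma rsum_minus n f g : rsum n (fun i => f i - g i) = rsum n f - rsum n g.
Proof. induction n; simpl; [lra | rewrite IHn; lra]. Qed.

Lemma rsum_scal n c f : rsum n (fun i => c * f i) = c * rsum n f.
Proof. induction n; simpl; [lra | rewrite IHn; lra]. Qed.

Lemma rsum_const n c : rsum n (fun _ => c) = INR n * c.
Proof. induction n; simpl rsum; [simpl; lra | rewrite IHn, S_INR; ring]. Qed.

Lemma rsum_zero n f : (forall i, (i < n)%nat -> f i = 0) -> rsum n f = 0.
Proof. intros H. rewrite (rsum_ext n f (fun _ => 0)), rsum_const by auto. ring. Qed.

Lemma rsum_le n f g : (forall i, (i < n)%nat -> f i <= g i) -> rsum n f <= rsum n g.
Proof.
  induction n; simpl; intros H; [lra |].
  pose proof (IHn ltac:(intros; apply H; lia)). pose proof (H n ltac:(lia)). lra.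
Qed.

Lemma rsum_lt n f g : (forall i, (i < n)%nat -> f i <= g i) ->
  (exists i, (i < n)%nat /\ f i < g i) -> rsum n f < rsum n g.
Proof.
  induction n; simpl; intros H [i [Hi Hlt]]; [lia |].
  destruct (Nat.eq_dec i n) as [-> | Hne].
  - pose proof (rsum_le n f g ltac:(intros; apply H; lia)). lra.
  - assert (rsum n f < rsum n g) by (apply IHn; [intros; apply H; lia | exists i; split; [lia | auto]]).
    specialize (H n ltac:(lia)). lra.
Qed.

Lemma rsum_abs n f : Rabs (rsum n f) <= rsum n (fun i => Rabs (f i)).
Proof.
  induction n; simpl; [rewrite Rabs_R0; lra |].
  eapply Rle_trans; [apply Rabs_triang | lra].
Qed.

Lemma rsum_neg_term n f : rsum n f < 0 -> exists j, (j < n)%nat /\ f j < 0.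
Proof.
  intros Hneg. apply NNPP. intros Hn.
  assert (Hge : rsum n (fun _ => 0) <= rsum n f).
  { apply rsum_le. intros i Hi. apply Rnot_lt_le. intros Hl. apply Hn; eauto. }
  rewrite (rsum_zero n (fun _ => 0)) in Hge by auto. lra.
Qed.

Lemma rsum_swap n m f :
  rsum n (fun i => rsum m (fun j => f i j)) = rsum m (fun j => rsum n (fun i => f i j)).
Proof.
  induction n; simpl.
  - symmetry; apply rsum_zero; auto.
  - rewrite IHn, <- rsum_plus. reflexivity.
Qed.

Lemma rsum_delta n k c : (k < n)%nat -> rsum n (fun j => if Nat.eqb j k then c else 0) = c.
Proof.
  induction n; intros Hk; [lia |]. simpl. destruct (Nat.eq_dec k n) as [-> | Hne].
  - rewrite Nat.eqb_refl, rsum_zero; [lra |].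
    intros i Hi. destruct (Nat.eqb_spec i n); [lia | auto].
  - rewrite IHn by lia. destruct (Nat.eqb_spec n k); [lia | lra].
Qed.

Lemma rsum_one n f i : (i < n)%nat -> (forall k, (k < n)%nat -> 0 <= f k) -> f i <= rsum n f.
Proof.
  intros Hi Hf. rewrite <- (rsum_delta n i (f i)) by auto. apply rsum_le. intros k Hk.
  specialize (Hf k Hk). destruct (Nat.eqb_spec k i); subst; lra.
Qed.

Lemma rsum_two n f i j : (i < n)%nat -> (j < n)%nat -> i <> j ->
  (forall k, (k < n)%nat -> 0 <= f k) -> f i + f j <= rsum n f.
Proof.
  intros Hi Hj Hij Hf.
  rewrite <- (rsum_delta n i (f i)), <- (rsum_delta n j (f j)), <- rsum_plus by auto.
  apply rsum_le. intros k Hk. specialize (Hf k Hk).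
  destruct (Nat.eqb_spec k i); destruct (Nat.eqb_spec k j); subst; try lia; lra.
Qed.

Lemma rsum_cv n (u : nat -> nat -> R) (l : nat -> R) :
  (forall i, (i < n)%nat -> Un_cv (fun k => u k i) (l i)) ->
  Un_cv (fun k => rsum n (u k)) (rsum n l).
Proof.
  induction n; simpl; intros H.
  - intros e He; exists 0%nat; intros; unfold R_dist; rewrite Rminus_diag, Rabs_R0; lra.
  - apply CV_plus; [apply IHn; intros; apply H; lia | apply H; lia].
Qed.

Lemma rsum_ext_ne n i f g :
  (forall j, (j < n)%nat -> j <> i -> f j = g j) -> rsum_ne n i f = rsum_ne n i g.
Proof. intros H; unfold rsum_ne; apply rsum_ext; intros j Hj. destruct (Nat.eqb_spec j i); auto. Qed.

Lemma rsum_ne_minus n i f g :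
  rsum_ne n i (fun j => f j - g j) = rsum_ne n i f - rsum_ne n i g.
Proof. unfold rsum_ne. rewrite <- rsum_minus. apply rsum_ext. intros j _. destruct (j =? i)%nat; lra. Qed.

Lemma rsum_ne_scal n i c f : rsum_ne n i (fun j => c * f j) = c * rsum_ne n i f.
Proof. unfold rsum_ne. rewrite <- rsum_scal. apply rsum_ext. intros j _. destruct (j =? i)%nat; lra. Qed.

Lemma rsum_ne_scal_r n i c f : rsum_ne n i (fun j => f j * c) = rsum_ne n i f * c.
Proof. rewrite Rmult_comm, <- rsum_ne_scal. apply rsum_ext_ne. intros; ring. Qed.

Lemma rsum_ne_le n i f g :
  (forall j, (j < n)%nat -> j <> i -> f j <= g j) -> rsum_ne n i f <= rsum_ne n i g.
Proof. intros H; unfold rsum_ne; apply rsum_le; intros j Hj. destruct (Nat.eqb_spec j i); [lra | auto]. Qed.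

Lemma rsum_ne_abs n i f : Rabs (rsum_ne n i f) <= rsum_ne n i (fun j => Rabs (f j)).
Proof.
  unfold rsum_ne. eapply Rle_trans; [apply rsum_abs |]. apply rsum_le. intros j _.
  destruct (j =? i)%nat; rewrite ?Rabs_R0; lra.
Qed.

Lemma rsum_ne_swap n f :
  rsum n (fun i => rsum_ne n i (fun j => f i j)) = rsum n (fun j => rsum_ne n j (fun i => f i j)).
Proof.
  unfold rsum_ne. rewrite rsum_swap. apply rsum_ext; intros j _. apply rsum_ext; intros i _.
  rewrite Nat.eqb_sym. reflexivity.
Qed.

Lemma rsum_ne_single n i j c f : (j < n)%nat -> j <> i ->
  (forall k, (k < n)%nat -> k <> i -> k <> j -> f k = 0) -> f j = c -> rsum_ne n i f = c.
Proof.
  intros Hj Hji H Hc. unfold rsum_ne. rewrite <- (rsum_delta n j c) by auto. apply rsum_ext. intros k Hk.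
  destruct (Nat.eqb_spec k i); destruct (Nat.eqb_spec k j); subst; try lia; auto.
Qed.

(** ** Maxima of finitely many affine functions

    A piece [p = (a, b)] is the affine function [y |-> a + b y].  [pl_max p0 l]
    is the pointwise maximum of the pieces [p0 :: l]; [pl_slope] selects the
    slope of an active piece, which is a subgradient, and [pl_bound] bounds all
    slopes, hence the Lipschitz constant. *)

Definition aff (p : R * R) (y : R) : R := fst p + snd p * y.

Fixpoint pl_max (p0 : R * R) (l : list (R * R)) (y : R) : R :=
  match l with
  | nil => aff p0 y
  | p :: l' => Rmax (aff p y) (pl_max p0 l' y)
  end.

Fixpoint pl_slope (p0 : R * R) (l : list (R * R)) (y : R) : R :=
  match l with
  | nil => snd p0
  | p :: l' => if Rle_dec (aff p y) (pl_max p0 l' y) then pl_slope p0 l' y else snd p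
  end.

Fixpoint pl_bound (p0 : R * R) (l : list (R * R)) : R :=
  match l with
  | nil => Rabs (snd p0)
  | p :: l' => Rabs (snd p) + pl_bound p0 l'
  end.

Lemma pl_max_subgrad p0 l y w : pl_max p0 l w >= pl_max p0 l y + pl_slope p0 l y * (w - y).
Proof.
  induction l as [| p l IH]; simpl; unfold aff in *; [lra |].
  destruct (Rle_dec (fst p + snd p * y) (pl_max p0 l y)) as [H | H]; simpl.
  - rewrite (Rmax_right _ _ H). pose proof (Rmax_r (fst p + snd p * w) (pl_max p0 l w)). lra.
  - apply Rnot_le_lt in H. rewrite (Rmax_left (fst p + snd p * y)) by lra.
    pose proof (Rmax_l (fst p + snd p * w) (pl_max p0 l w)). lra.
Qed.

Lemma pl_bound_nonneg p0 l : 0 <= pl_bound p0 l.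
Proof.
  induction l as [| p l IH]; simpl; [apply Rabs_pos |]. pose proof (Rabs_pos (snd p)). lra.
Qed.

Lemma pl_slope_bound p0 l y : Rabs (pl_slope p0 l y) <= pl_bound p0 l.
Proof.
  induction l as [| p l IH]; simpl; [lra |].
  pose proof (Rabs_pos (snd p)). pose proof (pl_bound_nonneg p0 l). destruct (Rle_dec _ _); lra.
Qed.

Lemma Rmax_diff a b c d : Rabs (Rmax a b - Rmax c d) <= Rabs (a - c) + Rabs (b - d).
Proof. unfold Rmax; repeat destruct Rle_dec; unfold Rabs; repeat destruct Rcase_abs; lra. Qed.

Lemma pl_max_lip p0 l y z : Rabs (pl_max p0 l y - pl_max p0 l z) <= pl_bound p0 l * Rabs (y - z).
Proof.
  assert (Haff : forall p, Rabs (aff p y - aff p z) = Rabs (snd p) * Rabs (y - z)).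
  { intros p. unfold aff. rewrite <- Rabs_mult. f_equal. ring. }
  induction l as [| p l IH]; simpl; [rewrite Haff; lra |].
  eapply Rle_trans; [apply Rmax_diff |]. rewrite Haff. lra.
Qed.

Lemma pl_max_eq p0 l y v : (forall p, In p (p0 :: l) -> aff p y <= v) ->
  (exists p, In p (p0 :: l) /\ aff p y = v) -> pl_max p0 l y = v.
Proof.
  intros Hle [p [Hp Hv]]. apply Rle_antisym.
  - clear Hp Hv. induction l as [| p' l IH]; simpl in *.
    + apply Hle; auto.
    + apply Rmax_lub; [apply Hle; auto |]. apply IH. intros p'' [H | H]; apply Hle; auto.
  - rewrite <- Hv. clear Hle Hv. induction l as [| p' l IH]; simpl in *.
    + destruct Hp as [<- | []]; lra.
    + destruct Hp as [<- | [<- | H]].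
      * eapply Rle_trans; [| apply Rmax_r]. apply IH; auto.
      * apply Rmax_l.
      * eapply Rle_trans; [| apply Rmax_r]. apply IH; auto.
Qed.

(** ** Divergences are Lyapunov functions of Kolmogorov equations *)

Definition kolmogorov_field (n : nat) (q : nat -> nat -> R) (Z : nat -> R) (i : nat) : R :=
  rsum_ne n i (fun j => q i j * Z j - q j i * Z i).

(** For a convex [hh] with subgradients [g], the rate of change of the divergence
    [sum_i Ps i * hh (y i)] along the Kolmogorov field at [P = Ps * y] is nonpositive:
    the balance condition turns it into [sum q_ij Ps_j g(y_i) (y_j - y_i)], which is
    below the telescoping sum [sum q_ij Ps_j (hh(y_j) - hh(y_i)) = 0]. *)
Lemma kolmogorov_lyapunov n Ps q (hh g : R -> R) (y : nat -> R) : markov_chain n Ps q ->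
  (forall i, (i < n)%nat -> 0 < Ps i) -> (forall u w, hh w >= hh u + g u * (w - u)) ->
  rsum n (fun i => g (y i) * kolmogorov_field n q (fun j => Ps j * y j) i) <= 0.
Proof.
  intros [Hq Hbal] HPs Hsub. unfold kolmogorov_field.
  assert (Hdiff : forall i, (i < n)%nat ->
     rsum_ne n i (fun j => q i j * (Ps j * y j) - q j i * (Ps i * y i))
     = rsum_ne n i (fun j => q i j * Ps j * (y j - y i))).
  { intros i Hi.
    rewrite (rsum_ext_ne n i (fun j => q i j * Ps j * (y j - y i))
               (fun j => q i j * (Ps j * y j) - (q i j * Ps j) * y i)) by (intros; ring).
    rewrite !rsum_ne_minus, rsum_ne_scal_r, (rsum_ne_scal_r n i (y i) (fun j => q i j * Ps j)).
    rewrite Hbal by auto. ring. }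
  apply Rle_trans with (rsum n (fun i => rsum_ne n i (fun j => q i j * Ps j * (hh (y j) - hh (y i))))).
  - apply rsum_le. intros i Hi. rewrite Hdiff, <- rsum_ne_scal by auto. apply rsum_ne_le.
    intros j Hj Hji. specialize (Hq i j Hi Hj (not_eq_sym Hji)). specialize (HPs j Hj).
    specialize (Hsub (y i) (y j)).
    assert (0 <= q i j * Ps j) by (apply Rmult_le_pos; lra).
    replace (g (y i) * (q i j * Ps j * (y j - y i))) with ((q i j * Ps j) * (g (y i) * (y j - y i))) by ring.
    apply Rmult_le_compat_l; lra.
  - right.
    rewrite (rsum_ext n _ (fun i => rsum_ne n i (fun j => q i j * Ps j * hh (y j))
                                    - rsum_ne n i (fun j => q j i) * Ps i * hh (y i))).
    2:{ intros i Hi. rewrite <- Hbal by auto. rewrite <- rsum_ne_scal_r, <- rsum_ne_minus.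
        apply rsum_ext_ne; intros; ring. }
    rewrite rsum_minus, rsum_ne_swap.
    rewrite (rsum_ext n (fun j => rsum_ne n j (fun i => q i j * Ps j * hh (y j)))
                        (fun j => rsum_ne n j (fun i => q i j) * Ps j * hh (y j))); [lra |].
    intros j _. rewrite <- !rsum_ne_scal_r. apply rsum_ext_ne; intros; ring.
Qed.

Definition cont_at (G : R -> R) (t : R) : Prop :=
  forall e, e > 0 -> exists d, d > 0 /\ forall h, Rabs h < d -> Rabs (G (t + h) - G t) < e.

Lemma mul_frac_lt a e : 0 <= a -> 0 < e -> a * (e / (a + 1)) < e.
Proof.
  intros Ha He. apply Rmult_lt_reg_r with (a + 1); [lra |].
  replace (a * (e / (a + 1)) * (a + 1)) with (a * e) by (field; lra). nra.
Qed.

Lemma finite_delta n (Q : nat -> R -> Prop) :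
  (forall i, (i < n)%nat -> exists d, d > 0 /\ forall h, Rabs h < d -> Q i h) ->
  exists d, d > 0 /\ forall h, Rabs h < d -> forall i, (i < n)%nat -> Q i h.
Proof.
  induction n; intros H.
  - exists 1; split; [lra | intros; lia].
  - destruct IHn as [d1 [Hd1 H1]]; [intros; apply H; lia |].
    destruct (H n ltac:(lia)) as [d2 [Hd2 H2]].
    exists (Rmin d1 d2). split; [apply Rmin_glb_lt; lra |].
    intros h Hh i Hi. pose proof (Rmin_l d1 d2). pose proof (Rmin_r d1 d2).
    destruct (Nat.eq_dec i n) as [-> |]; [apply H2; lra | apply H1; [lra | lia]].
Qed.

Lemma derivable_cont_at f t D : derivable_pt_lim f t D -> cont_at f t.
Proof.
  intros Hd e He. destruct (Hd 1 ltac:(lra)) as [d0 Hd0]. pose proof (Rabs_pos D).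
  exists (Rmin d0 (e / (Rabs D + 1))).
  split; [apply Rmin_glb_lt; [apply cond_pos | apply Rdiv_lt_0_compat; lra] |].
  intros h Hh. pose proof (Rmin_l d0 (e / (Rabs D + 1))). pose proof (Rmin_r d0 (e / (Rabs D + 1))).
  destruct (Req_dec h 0) as [-> | Hh0]; [rewrite Rplus_0_r, Rminus_diag, Rabs_R0; lra |].
  specialize (Hd0 h Hh0 ltac:(lra)).
  replace (f (t + h) - f t) with (h * ((f (t + h) - f t) / h - D) + h * D) by (field; auto).
  eapply Rle_lt_trans; [apply Rabs_triang |]. rewrite !Rabs_mult.
  assert (0 < Rabs h) by (apply Rabs_pos_lt; auto).
  assert (Rabs h * Rabs ((f (t + h) - f t) / h - D) <= Rabs h) by nra.
  assert (Rabs h * (Rabs D + 1) < e).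
  { apply Rmult_lt_reg_r with (/ (Rabs D + 1)); [apply Rinv_0_lt_compat; lra |].
    rewrite Rmult_assoc, Rinv_r by lra. unfold Rdiv in *. lra. }
  nra.
Qed.

Lemma cont_at_sub_linear G c t : cont_at G t -> cont_at (fun s => G s - c * s) t.
Proof.
  intros HG e He. destruct (HG (e / 2) ltac:(lra)) as [d [Hd Hd']]. pose proof (Rabs_pos c).
  exists (Rmin d (e / 2 / (Rabs c + 1))).
  split; [apply Rmin_glb_lt; [lra | apply Rdiv_lt_0_compat; lra] |].
  intros h Hh. pose proof (Rmin_l d (e / 2 / (Rabs c + 1))). pose proof (Rmin_r d (e / 2 / (Rabs c + 1))).
  specialize (Hd' h ltac:(lra)). pose proof (mul_frac_lt (Rabs c) (e / 2) ltac:(lra) ltac:(lra)).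
  replace (G (t + h) - c * (t + h) - (G t - c * t)) with ((G (t + h) - G t) + - (c * h)) by ring.
  eapply Rle_lt_trans; [apply Rabs_triang |]. rewrite Rabs_Ropp, Rabs_mult.
  assert (Rabs c * Rabs h <= Rabs c * (e / 2 / (Rabs c + 1))) by (apply Rmult_le_compat_l; lra).
  lra.
Qed.

(** A continuous function on [[0,1]] that does not increase immediately to the right of
    any point of [[0,1)] satisfies [G 1 <= G 0] (a real-induction argument on the
    supremum of the times up to which [G <= G 0]). *)
Lemma right_nonincreasing_le (G : R -> R) :
  (forall t, 0 <= t < 1 -> exists d, d > 0 /\ forall s, t < s < t + d -> G s <= G t) ->
  (forall t, 0 <= t <= 1 -> cont_at G t) ->
  G 1 <= G 0.
Proof.
  intros Hr Hc.
  set (E := fun u => 0 <= u <= 1 /\ forall s, 0 <= s <= u -> G s <= G 0).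
  assert (HE0 : E 0) by (split; [lra | intros s Hs; replace s with 0 by lra; lra]).
  destruct (completeness E) as [tau [Hub Hlub]]; [exists 1; intros u [Hu _]; lra | eauto |].
  assert (Ht0 : 0 <= tau) by (apply Hub; auto).
  assert (Ht1 : tau <= 1) by (apply Hlub; intros u [Hu _]; lra).
  assert (Hbelow : forall s, 0 <= s < tau -> G s <= G 0).
  { intros s Hs. destruct (classic (exists u, E u /\ s < u)) as [[u [[_ Hu] Hsu]] | Hn].
    - apply Hu; lra.
    - assert (tau <= s); [| lra]. apply Hlub. intros x Hx. apply Rnot_lt_le. intros Hxs. apply Hn. eauto. }
  assert (Hat : G tau <= G 0).
  { destruct (Req_dec tau 0) as [-> | Hne]; [lra |].
    apply Rnot_lt_le. intros Hlt. destruct (Hc tau (conj Ht0 Ht1) (G tau - G 0) ltac:(lra)) as [d [Hd Hd']].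
    set (s := Rmax 0 (tau - d / 2)).
    assert (0 <= s) by apply Rmax_l. assert (tau - d / 2 <= s) by apply Rmax_r.
    assert (s < tau) by (unfold s; apply Rmax_lub_lt; lra).
    specialize (Hd' (s - tau) ltac:(rewrite Rabs_left by lra; lra)).
    replace (tau + (s - tau)) with s in Hd' by ring. specialize (Hbelow s ltac:(lra)).
    apply Rabs_def2 in Hd'. lra. }
  assert (Hupto : forall s, 0 <= s <= tau -> G s <= G 0).
  { intros s Hs. destruct (Req_dec s tau) as [-> |]; auto. apply Hbelow; lra. }
  destruct (Req_dec tau 1) as [<- | Hne]; [apply Hupto; lra |].
  exfalso. destruct (Hr tau ltac:(lra)) as [d [Hd Hd']].
  set (u := Rmin 1 (tau + d / 2)).
  assert (u <= 1) by apply Rmin_l. assert (u <= tau + d / 2) by apply Rmin_r.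
  assert (tau < u) by (unfold u; apply Rmin_glb_lt; lra).
  assert (HEu : E u).
  { split; [lra |]. intros s Hs. destruct (Rle_dec s tau); [apply Hupto; lra |].
    specialize (Hd' s ltac:(lra)). specialize (Hupto tau ltac:(lra)). lra. }
  specialize (Hub u HEu). lra.
Qed.

Lemma kolmogorov_field_cont n q (Z : R -> nat -> R) t :
  (forall j, (j < n)%nat -> cont_at (fun s => Z s j) t) ->
  forall i, (i < n)%nat -> cont_at (fun s => kolmogorov_field n q (Z s) i) t.
Proof.
  intros HZ i Hi e He.
  set (C := rsum_ne n i (fun j => Rabs (q i j) + Rabs (q j i))).
  assert (HC : 0 <= C).
  { unfold C. rewrite <- (Rmult_0_r (INR n)), <- rsum_const. unfold rsum_ne. apply rsum_le.
    intros j _. destruct (j =? i)%nat; [lra |]. pose proof (Rabs_pos (q i j)); pose proof (Rabs_pos (q j i)); lra. }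
  set (a := e / (C + 1)). assert (Ha : 0 < a) by (apply Rdiv_lt_0_compat; lra).
  destruct (finite_delta n (fun j h => Rabs (Z (t + h) j - Z t j) < a)) as [d [Hd Hd']].
  { intros j Hj. apply (HZ j Hj a Ha). }
  exists d. split; auto. intros h Hh. unfold kolmogorov_field. rewrite <- rsum_ne_minus.
  eapply Rle_lt_trans; [apply rsum_ne_abs |].
  apply Rle_lt_trans with (C * a); [| apply mul_frac_lt; lra].
  unfold C. rewrite <- rsum_ne_scal_r. apply rsum_ne_le. intros j Hj _.
  pose proof (Hd' h Hh j Hj). pose proof (Hd' h Hh i Hi).
  pose proof (Rabs_pos (q i j)); pose proof (Rabs_pos (q j i)).
  replace (q i j * Z (t + h) j - q j i * Z (t + h) i - (q i j * Z t j - q j i * Z t i))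
    with (q i j * (Z (t + h) j - Z t j) - q j i * (Z (t + h) i - Z t i)) by ring.
  eapply Rle_trans; [apply Rabs_triang |]. rewrite Rabs_Ropp, !Rabs_mult.
  assert (Rabs (q i j) * Rabs (Z (t + h) j - Z t j) <= Rabs (q i j) * a) by (apply Rmult_le_compat_l; lra).
  assert (Rabs (q j i) * Rabs (Z (t + h) i - Z t i) <= Rabs (q j i) * a) by (apply Rmult_le_compat_l; lra).
  lra.
Qed.

Lemma kolmogorov_forward_quotient n q X t eta : kolmogorov_solution n q X -> eta > 0 ->
  exists d, d > 0 /\ forall h, 0 < h < d -> forall i, (i < n)%nat ->
    Rabs ((X (t + h) i - X t i) / h - kolmogorov_field n q (X (t + h)) i) < eta.
Proof.
  intros HX Heta.
  assert (Hcont : forall j, (j < n)%nat -> cont_at (fun s => X s j) t)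
    by (intros j Hj; exact (derivable_cont_at _ t _ (HX j Hj t))).
  destruct (finite_delta n (fun i h => (h <> 0 ->
      Rabs ((X (t + h) i - X t i) / h - kolmogorov_field n q (X t) i) < eta / 2) /\
      Rabs (kolmogorov_field n q (X (t + h)) i - kolmogorov_field n q (X t) i) < eta / 2))
    as [d [Hd Hd']].
  { intros i Hi. destruct (HX i Hi t (eta / 2) ltac:(lra)) as [d1 Hd1].
    destruct (kolmogorov_field_cont n q X t Hcont i Hi (eta / 2) ltac:(lra)) as [d2 [Hd2 Hd2']].
    exists (Rmin d1 d2). split; [apply Rmin_glb_lt; [apply cond_pos | lra] |].
    intros h Hh. pose proof (Rmin_l d1 d2). pose proof (Rmin_r d1 d2).
    split; [intros Hh0; apply Hd1; auto; lra | apply Hd2'; lra]. }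
  exists d. split; auto. intros h Hh i Hi.
  destruct (Hd' h ltac:(rewrite Rabs_right; lra) i Hi) as [Hquot Hfield]. specialize (Hquot ltac:(lra)).
  replace ((X (t + h) i - X t i) / h - kolmogorov_field n q (X (t + h)) i) with
    (((X (t + h) i - X t i) / h - kolmogorov_field n q (X t) i)
     - (kolmogorov_field n q (X (t + h)) i - kolmogorov_field n q (X t) i)) by ring.
  eapply Rle_lt_trans; [apply Rabs_triang |]. rewrite Rabs_Ropp. lra.
Qed.

Lemma lipschitz_cv (f : R -> R) B (u : nat -> R) x : 0 <= B ->
  (forall y z, Rabs (f y - f z) <= B * Rabs (y - z)) -> Un_cv u x -> Un_cv (fun k => f (u k)) (f x).
Proof.
  intros HB Hf Hu e He. destruct (Hu (e / (B + 1))) as [N HN]; [apply Rdiv_lt_0_compat; lra |].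
  exists N. intros k Hk. specialize (HN k Hk). unfold R_dist in *.
  eapply Rle_lt_trans; [apply Hf |]. pose proof (Rabs_pos (u k - x)).
  apply Rle_lt_trans with (B * (e / (B + 1))); [apply Rmult_le_compat_l; lra | apply mul_frac_lt; lra].
Qed.

(** ** Markov steps decrease piecewise-linear divergences *)

Section PiecewiseLinearDivergence.

Variable n : nat.
Variable Ps : nat -> R.
Hypothesis Ps_pos : forall i, (i < n)%nat -> 0 < Ps i.
Variables (p0 : R * R) (l : list (R * R)).

Let D (P : nat -> R) : R := f_div n (pl_max p0 l) P Ps.

Lemma pl_div_lip P Q : Rabs (D P - D Q) <= pl_bound p0 l * rsum n (fun i => Rabs (P i - Q i)).
Proof.
  unfold D, f_div. rewrite <- rsum_minus, <- rsum_scal.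
  eapply Rle_trans; [apply rsum_abs |]. apply rsum_le. intros i Hi. specialize (Ps_pos i Hi).
  rewrite <- Rmult_minus_distr_l, Rabs_mult, (Rabs_right (Ps i)) by lra.
  pose proof (pl_max_lip p0 l (P i / Ps i) (Q i / Ps i)). pose proof (pl_bound_nonneg p0 l).
  replace (Rabs (P i - Q i)) with (Ps i * Rabs (P i / Ps i - Q i / Ps i)).
  - nra.
  - rewrite <- (Rabs_right (Ps i)) at 1 by lra. rewrite <- Rabs_mult. f_equal. field. lra.
Qed.

Lemma pl_div_cont (Z : R -> nat -> R) t :
  (forall i, (i < n)%nat -> cont_at (fun s => Z s i) t) -> cont_at (fun s => D (Z s)) t.
Proof.
  intros HZ e He. set (B := pl_bound p0 l). pose proof (pl_bound_nonneg p0 l) as HB. fold B in HB.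
  pose proof (pos_INR n).
  set (a := e / (B * INR n + 1)). assert (Ha : 0 < a) by (apply Rdiv_lt_0_compat; nra).
  destruct (finite_delta n (fun i h => Rabs (Z (t + h) i - Z t i) < a)) as [d [Hd Hd']].
  { intros i Hi. apply (HZ i Hi a Ha). }
  exists d. split; auto. intros h Hh.
  assert (Hsum : rsum n (fun i => Rabs (Z (t + h) i - Z t i)) <= INR n * a).
  { rewrite <- rsum_const. apply rsum_le. intros i Hi. left. apply Hd'; auto. }
  eapply Rle_lt_trans; [apply pl_div_lip |]. fold B.
  apply Rle_lt_trans with ((B * INR n) * a); [| apply mul_frac_lt; nra].
  rewrite Rmult_assoc. apply Rmult_le_compat_l; lra.
Qed.

Definition active_slopes (Y : nat -> R) (i : nat) : R := pl_slope p0 l (Y i / Ps i).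

Lemma pl_div_increment Y Z :
  D Y - D Z <= rsum n (fun i => active_slopes Y i * (Y i - Z i)).
Proof.
  unfold D, f_div. rewrite <- rsum_minus. apply rsum_le. intros i Hi. specialize (Ps_pos i Hi).
  pose proof (pl_max_subgrad p0 l (Y i / Ps i) (Z i / Ps i)). unfold active_slopes.
  replace (Y i - Z i) with (Ps i * (Y i / Ps i - Z i / Ps i)) by (field; lra). nra.
Qed.

Lemma pl_div_drift q Y : markov_chain n Ps q ->
  rsum n (fun i => active_slopes Y i * kolmogorov_field n q Y i) <= 0.
Proof.
  intros Hq. eapply Rle_trans;
    [| apply (kolmogorov_lyapunov n Ps q (pl_max p0 l) (pl_slope p0 l) (fun i => Y i / Ps i) Hq Ps_pos);
       intros u w; apply pl_max_subgrad].
  right. apply rsum_ext. intros i Hi. unfold active_slopes, kolmogorov_field. f_equal.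
  apply rsum_ext_ne. intros j Hj _. pose proof (Ps_pos i Hi); pose proof (Ps_pos j Hj). field; lra.
Qed.

Lemma pl_div_right_step q X : markov_chain n Ps q -> kolmogorov_solution n q X ->
  forall t e, e > 0 -> exists d, d > 0 /\ forall s, t < s < t + d -> D (X s) <= D (X t) + e * (s - t).
Proof.
  intros Hq HX t e He. set (B := pl_bound p0 l). pose proof (pl_bound_nonneg p0 l) as HB. fold B in HB.
  pose proof (pos_INR n).
  set (eta := e / (INR n * B + 1)). assert (Heta : eta > 0) by (apply Rdiv_lt_0_compat; nra).
  destruct (kolmogorov_forward_quotient n q X t eta HX Heta) as [d [Hd Hd']].
  exists d. split; auto. intros s Hs. set (h := s - t). assert (Hh : 0 < h) by (unfold h; lra).
  replace s with (t + h) in * by (unfold h; ring).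
  set (g := active_slopes (X (t + h))). set (K := kolmogorov_field n q (X (t + h))).
  set (w := fun i => (X (t + h) i - X t i) / h - K i).
  assert (Hsplit : rsum n (fun i => g i * (X (t + h) i - X t i)) =
                   h * rsum n (fun i => g i * K i) + h * rsum n (fun i => g i * w i)).
  { rewrite <- !rsum_scal, <- rsum_plus. apply rsum_ext. intros i _. unfold w. field. lra. }
  assert (Herr : rsum n (fun i => g i * w i) <= INR n * B * eta).
  { rewrite Rmult_assoc, <- rsum_const. apply rsum_le. intros i Hi.
    assert (Hw : Rabs (w i) < eta) by exact (Hd' h ltac:(lra) i Hi).
    assert (Hg : Rabs (g i) <= B) by apply pl_slope_bound.
    apply Rle_trans with (Rabs (g i * w i)); [apply Rle_abs |]. rewrite Rabs_mult.
    apply Rmult_le_compat; [apply Rabs_pos | apply Rabs_pos | lra | lra]. }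
  pose proof (pl_div_increment (X (t + h)) (X t)) as Hinc. fold g in Hinc.
  pose proof (pl_div_drift q (X (t + h)) Hq) as Hdrift. fold g K in Hdrift.
  pose proof (mul_frac_lt (INR n * B) e ltac:(nra) He) as Hsmall. fold eta in Hsmall.
  replace (t + h - t) with h by ring. nra.
Qed.

Lemma pl_div_kolmogorov_mono q X : markov_chain n Ps q -> kolmogorov_solution n q X ->
  D (X 1) <= D (X 0).
Proof.
  intros Hq HX. apply le_epsilon. intros e He.
  enough (D (X 1) - e * 1 <= D (X 0) - e * 0) by lra.
  apply (right_nonincreasing_le (fun t => D (X t) - e * t)).
  - intros t _. destruct (pl_div_right_step q X Hq HX t e He) as [d [Hd Hd']].
    exists d; split; auto. intros s Hs. specialize (Hd' s Hs). lra.
  - intros t _. apply cont_at_sub_linear, pl_div_cont.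
    intros i Hi. exact (derivable_cont_at _ t _ (HX i Hi t)).
Qed.

Lemma pl_div_step_mono a b : markov_step n Ps a b -> D b <= D a.
Proof.
  intros [q [Hq [X [HX [H0 H1]]]]]. pose proof (pl_div_kolmogorov_mono q X Hq HX) as Hmono.
  unfold D, f_div in *.
  rewrite (rsum_ext n (fun i => Ps i * pl_max p0 l (b i / Ps i)) (fun i => Ps i * pl_max p0 l (X 1 i / Ps i)))
    by (intros i Hi; rewrite H1; auto).
  rewrite (rsum_ext n (fun i => Ps i * pl_max p0 l (a i / Ps i)) (fun i => Ps i * pl_max p0 l (X 0 i / Ps i)))
    by (intros i Hi; rewrite H0; auto).
  exact Hmono.
Qed.

Lemma pl_div_cv (a : nat -> nat -> R) x :
  (forall i, (i < n)%nat -> Un_cv (fun k => a k i) (x i)) -> Un_cv (fun k => D (a k)) (D x).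
Proof.
  intros Hc. unfold D, f_div. apply rsum_cv. intros i Hi. specialize (Ps_pos i Hi).
  apply (lipschitz_cv (fun y => Ps i * pl_max p0 l (y / Ps i)) (pl_bound p0 l));
    [apply pl_bound_nonneg | | apply Hc; auto].
  intros y z. rewrite <- Rmult_minus_distr_l, Rabs_mult, (Rabs_right (Ps i)) by lra.
  pose proof (pl_max_lip p0 l (y / Ps i) (z / Ps i)) as Hlip. pose proof (pl_bound_nonneg p0 l).
  replace (y / Ps i - z / Ps i) with ((y - z) / Ps i) in Hlip by (field; lra).
  unfold Rdiv in Hlip.
  rewrite Rabs_mult, (Rabs_right (/ Ps i)) in Hlip by (left; apply Rinv_0_lt_compat; lra).
  apply Rle_trans with (Ps i * (pl_bound p0 l * (Rabs (y - z) * / Ps i))); [apply Rmult_le_compat_l; lra |].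
  right. field. lra.
Qed.

(** The relation "the piecewise-linear divergence does not increase" is transitive,
    closed and contains the Markov steps, so it contains the Markov order. *)
Lemma pl_div_order_mono P0 P1 : markov_order n Ps P0 P1 -> D P1 <= D P0.
Proof.
  intros [_ [_ Hclosure]].
  apply (Hclosure (fun a b => D b <= D a)).
  - intros a b _ _. apply pl_div_step_mono; auto.
  - intros a b c H1 H2. lra.
  - intros a b x y Hab Ha Hb _ _.
    apply Rle_cv_lim with (Un := fun k => D (b k))
                          (Vn := fun k => D (a k));
      [exact Hab | apply pl_div_cv | apply pl_div_cv]; auto.
Qed.

End PiecewiseLinearDivergence.

(** ** Markov order decreases every strictly convex divergence *)

Lemma chord_slopes_increase h w z u : strictly_convex_pos h -> 0 < w -> w < z -> z < u ->
  (h z - h w) / (z - w) <= (h u - h z) / (u - z).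
Proof.
  intros Hc Hw Hwz Hzu.
  set (lam := (u - z) / (u - w)).
  assert (Hl : 0 < lam < 1).
  { unfold lam. split; [apply Rdiv_lt_0_compat; lra |].
    apply Rmult_lt_reg_r with (u - w); [lra |]. unfold Rdiv. rewrite Rmult_assoc, Rinv_l; lra. }
  specialize (Hc w u lam Hw ltac:(lra) ltac:(lra) Hl).
  replace (lam * w + (1 - lam) * u) with z in Hc by (unfold lam; field; lra).
  assert (Hmid : h z * (u - w) < (u - z) * h w + (z - w) * h u).
  { replace (u - z) with (lam * (u - w)) by (unfold lam; field; lra).
    replace (z - w) with ((1 - lam) * (u - w)) by (unfold lam; field; lra). nra. }
  apply Rmult_le_reg_r with ((z - w) * (u - z)); [nra |].
  replace ((h z - h w) / (z - w) * ((z - w) * (u - z))) with ((h z - h w) * (u - z)) by (field; lra).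
  replace ((h u - h z) / (u - z) * ((z - w) * (u - z))) with ((h u - h z) * (z - w)) by (field; lra).
  nra.
Qed.

(** A convex function on [(0, oo)] has a supporting line at every point: its slope is
    the supremum of the slopes of the chords ending at [z]. *)
Lemma supporting_line h z : strictly_convex_pos h -> 0 < z ->
  exists g, forall w, 0 < w -> h w >= h z + g * (w - z).
Proof.
  intros Hc Hz.
  set (E := fun s => exists w, 0 < w < z /\ s = (h z - h w) / (z - w)).
  assert (Hub : forall u, z < u -> forall s, E s -> s <= (h u - h z) / (u - z)).
  { intros u Hu s [w [Hw ->]]. apply chord_slopes_increase; auto; lra. }
  destruct (completeness E) as [g [Hg1 Hg2]].
  - exists ((h (z + 1) - h z) / (z + 1 - z)). intros s Hs. apply (Hub (z + 1)); auto; lra.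
  - exists ((h z - h (z / 2)) / (z - z / 2)). exists (z / 2). split; [lra | auto].
  - exists g. intros w Hw. destruct (Rtotal_order w z) as [Hlt | [-> | Hgt]]; [| lra |].
    + assert ((h z - h w) / (z - w) <= g) by (apply Hg1; exists w; split; [lra | auto]).
      assert (h z - h w <= g * (z - w)); [| lra].
      replace (h z - h w) with ((h z - h w) / (z - w) * (z - w)) by (field; lra).
      apply Rmult_le_compat_r; lra.
    + assert (g <= (h w - h z) / (w - z)) by (apply Hg2; intros s Hs; apply Hub; auto).
      assert (g * (w - z) <= h w - h z); [| lra].
      replace (h w - h z) with ((h w - h z) / (w - z) * (w - z)) by (field; lra).
      apply Rmult_le_compat_r; lra.
Qed.

Lemma supporting_pieces h (zs : list R) : strictly_convex_pos h ->
  (forall z, In z zs -> 0 < z) ->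
  exists p0 l, (forall p, In p (p0 :: l) -> forall w, 0 < w -> aff p w <= h w) /\
               (forall z, In z zs -> exists p, In p (p0 :: l) /\ aff p z = h z).
Proof.
  intros Hc. induction zs as [| z zs IH]; intros Hpos.
  - destruct (supporting_line h 1 Hc ltac:(lra)) as [g Hg].
    exists (h 1 - g * 1, g), nil. split; [| intros z []].
    intros p [<- | []] w Hw. unfold aff; simpl. specialize (Hg w Hw). lra.
  - destruct IH as [p0 [l [Hbelow Htouch]]]; [intros; apply Hpos; simpl; auto |].
    destruct (supporting_line h z Hc (Hpos z (or_introl eq_refl))) as [g Hg].
    exists p0, ((h z - g * z, g) :: l). split.
    + intros p [<- | [<- | Hp]] w Hw; [apply Hbelow; simpl; auto | | apply Hbelow; simpl; auto].
      unfold aff; simpl. specialize (Hg w Hw). lra.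
    + intros z' [Hzz | Hz'].
      * subst z'. exists (h z - g * z, g). split; [simpl; auto | unfold aff; simpl; ring].
      * destruct (Htouch z' Hz') as [p [Hp Hpz]]. exists p. split; auto.
        destruct Hp as [<- | Hp]; simpl; auto.
Qed.

Lemma markov_order_f_div_mono n Ps P0 P1 h : (forall i, (i < n)%nat -> 0 < Ps i) ->
  markov_order n Ps P0 P1 -> strictly_convex_pos h -> f_div n h P1 Ps <= f_div n h P0 Ps.
Proof.
  intros HPs HM Hc. pose proof HM as [[H0 _] [[H1 _] _]].
  set (ratios := fun P : nat -> R => map (fun i => P i / Ps i) (seq 0 n)).
  assert (Hin : forall P i, (i < n)%nat -> In (P i / Ps i) (ratios P))
    by (intros P i Hi; apply in_map_iff; exists i; split; auto; apply in_seq; lia).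
  destruct (supporting_pieces h (ratios P0 ++ ratios P1) Hc) as [p0 [l [Hbelow Htouch]]].
  { intros z Hz. apply in_app_or in Hz.
    destruct Hz as [Hz | Hz]; apply in_map_iff in Hz; destruct Hz as [i [<- Hi]]; apply in_seq in Hi;
      apply Rdiv_lt_0_compat; [apply H0 | apply HPs | apply H1 | apply HPs]; lia. }
  assert (Hagree : forall P, (forall i, (i < n)%nat -> 0 < P i) ->
            (forall i, (i < n)%nat -> In (P i / Ps i) (ratios P0 ++ ratios P1)) ->
            f_div n h P Ps = f_div n (pl_max p0 l) P Ps).
  { intros P HP Hr. apply rsum_ext. intros i Hi. f_equal. symmetry.
    assert (Hz : 0 < P i / Ps i) by (apply Rdiv_lt_0_compat; auto).
    apply pl_max_eq; [intros p Hp; apply Hbelow; auto | apply Htouch, Hr; auto]. }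
  rewrite !Hagree by (auto; intros i Hi; apply in_or_app; auto).
  apply pl_div_order_mono; auto.
Qed.

(** ** Divergence order forbids mass gain on upper sets *)

Definition upper_set (n : nat) (x : nat -> R) (S : nat -> bool) : Prop :=
  forall i j, (i < n)%nat -> (j < n)%nat -> S i = true -> x i < x j -> S j = true.

Definition mass_on (n : nat) (S : nat -> bool) (v : nat -> R) : R :=
  rsum n (fun i => if S i then v i else 0).

Lemma exists_argmax n (P : nat -> Prop) (f : nat -> R) : (exists k, (k < n)%nat /\ P k) ->
  exists i, (i < n)%nat /\ P i /\ forall k, (k < n)%nat -> P k -> f k <= f i.
Proof.
  induction n; intros [k [Hk HP]]; [lia |].
  destruct (classic (exists k, (k < n)%nat /\ P k)) as [Hex | Hno].
  - destruct (IHn Hex) as [i [Hi [HPi Hmax]]].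
    destruct (classic (P n /\ f i < f n)) as [[HPn Hlt] | Hn].
    + exists n. split; [lia | split; auto]. intros k' Hk' HPk'.
      destruct (Nat.eq_dec k' n) as [-> |]; [lra |]. specialize (Hmax k' ltac:(lia) HPk'). lra.
    + exists i. split; [lia | split; auto]. intros k' Hk' HPk'. destruct (Nat.eq_dec k' n) as [-> |].
      * apply Rnot_lt_le. intros Hl. apply Hn; auto.
      * apply Hmax; auto; lia.
  - assert (k = n) as ->.
    { destruct (Nat.eq_dec k n); auto. exfalso; apply Hno; exists k; split; auto; lia. }
    exists n. split; [lia | split; auto]. intros k' Hk' HPk'.
    destruct (Nat.eq_dec k' n) as [-> |]; [lra |]. exfalso; apply Hno; exists k'; split; auto; lia.
Qed.

Lemma exists_argmin n (P : nat -> Prop) (f : nat -> R) : (exists k, (k < n)%nat /\ P k) ->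
  exists i, (i < n)%nat /\ P i /\ forall k, (k < n)%nat -> P k -> f i <= f k.
Proof.
  intros H. destruct (exists_argmax n P (fun k => - f k) H) as [i [Hi [HP Hm]]].
  exists i; split; auto; split; auto. intros k Hk HPk. specialize (Hm k Hk HPk). lra.
Qed.

Lemma hinge_strictly_convex t e : e > 0 -> strictly_convex_pos (fun y => Rmax 0 (y - t) + e * (y * y)).
Proof.
  intros He x y l Hx Hy Hxy Hl.
  assert (Hhinge : Rmax 0 (l * x + (1 - l) * y - t) <= l * Rmax 0 (x - t) + (1 - l) * Rmax 0 (y - t)).
  { pose proof (Rmax_l 0 (x - t)). pose proof (Rmax_r 0 (x - t)).
    pose proof (Rmax_l 0 (y - t)). pose proof (Rmax_r 0 (y - t)). apply Rmax_lub; nra. }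
  assert (Hsquare : (l * x + (1 - l) * y) * (l * x + (1 - l) * y) < l * (x * x) + (1 - l) * (y * y)).
  { assert (0 < (x - y) * (x - y)) by (assert (x - y <> 0) by lra; nra).
    assert (0 < l * (1 - l)) by nra. nra. }
  nra.
Qed.

Lemma le_of_perturbed_lt a b c1 c2 : (forall e, e > 0 -> a + e * c1 < b + e * c2) -> a <= b.
Proof.
  intros H. apply le_epsilon. intros eps Heps. pose proof (Rabs_pos (c2 - c1)).
  set (e := eps / (Rabs (c2 - c1) + 1)). assert (He : e > 0) by (apply Rdiv_lt_0_compat; lra).
  specialize (H e He).
  pose proof (mul_frac_lt (Rabs (c2 - c1)) eps ltac:(lra) Heps) as Hsmall. fold e in Hsmall.
  assert (e * (c2 - c1) <= e * Rabs (c2 - c1)) by (apply Rmult_le_compat_l; [lra | apply Rle_abs]).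
  lra.
Qed.

Lemma H_order_hinge n Ps P0 P1 t : H_order n Ps P0 P1 ->
  f_div n (fun y => Rmax 0 (y - t)) P1 Ps <= f_div n (fun y => Rmax 0 (y - t)) P0 Ps.
Proof.
  intros HH. set (C := fun P : nat -> R => f_div n (fun y => y * y) P Ps).
  apply (le_of_perturbed_lt _ _ (C P1) (C P0)). intros e He.
  specialize (HH _ (hinge_strictly_convex t e He)). unfold C, f_div in *. cbv beta.
  rewrite <- !rsum_scal, <- !rsum_plus.
  eapply Rle_lt_trans; [| eapply Rlt_le_trans; [apply HH |]]; right; apply rsum_ext; intros; ring.
Qed.

(** If [P0 >_{H,Ps} P1], then no upper set for the ratios [P0 i / Ps i] gains mass:
    test with the hinge at the smallest ratio inside [S]. *)
Lemma H_order_upper_sets n Ps P0 P1 S : (forall i, (i < n)%nat -> 0 < Ps i) -> H_order n Ps P0 P1 ->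
  upper_set n (fun i => P0 i / Ps i) S -> mass_on n S (fun i => P1 i - P0 i) <= 0.
Proof.
  intros HPs HH Hup.
  destruct (classic (exists k, (k < n)%nat /\ S k = true)) as [Hex | Hno].
  2:{ unfold mass_on. rewrite rsum_zero; [lra |].
      intros i Hi. destruct (S i) eqn:E; auto. exfalso; apply Hno; eauto. }
  destruct (exists_argmin n (fun k => S k = true) (fun i => P0 i / Ps i) Hex) as [k [Hk [HSk Hmin]]].
  set (t := P0 k / Ps k). pose proof (H_order_hinge n Ps P0 P1 t HH) as Hhinge.
  set (base := rsum n (fun i => if S i then t * Ps i else 0)).
  assert (Hmass1 : mass_on n S P1 - base <= f_div n (fun y => Rmax 0 (y - t)) P1 Ps).
  { unfold mass_on, base, f_div. rewrite <- rsum_minus. apply rsum_le. intros i Hi. specialize (HPs i Hi).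
    pose proof (Rmax_l 0 (P1 i / Ps i - t)). pose proof (Rmax_r 0 (P1 i / Ps i - t)).
    destruct (S i).
    - replace (P1 i - t * Ps i) with (Ps i * (P1 i / Ps i - t)) by (field; lra).
      apply Rmult_le_compat_l; lra.
    - assert (0 <= Ps i * Rmax 0 (P1 i / Ps i - t)) by (apply Rmult_le_pos; lra). lra. }
  assert (Hmass0 : mass_on n S P0 - base = f_div n (fun y => Rmax 0 (y - t)) P0 Ps).
  { unfold mass_on, base, f_div. rewrite <- rsum_minus. apply rsum_ext. intros i Hi. specialize (HPs i Hi).
    destruct (S i) eqn:ES.
    - specialize (Hmin i Hi ES). rewrite Rmax_right by (unfold t in *; lra). field. lra.
    - assert (P0 i / Ps i <= t).
      { apply Rnot_lt_le. intros Hl. rewrite (Hup k i Hk Hi HSk Hl) in ES. discriminate. }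
      rewrite Rmax_left by lra. ring. }
  unfold mass_on in *.
  rewrite (rsum_ext n _ (fun i => (if S i then P1 i else 0) - (if S i then P0 i else 0)))
    by (intros i _; destruct (S i); ring).
  rewrite rsum_minus. lra.
Qed.

(** ** Decomposition into downhill transfers *)

Definition transfer (P : nat -> R) (i j : nat) (d : R) : nat -> R :=
  fun k => P k + ((if Nat.eqb k i then d else 0) - (if Nat.eqb k j then d else 0)).

Lemma rsum_transfer n P i j d : (i < n)%nat -> (j < n)%nat -> rsum n (transfer P i j d) = rsum n P.
Proof. intros Hi Hj. unfold transfer. rewrite rsum_plus, rsum_minus, !rsum_delta by auto. ring. Qed.

Lemma mass_on_transfer n S v i j d : (i < n)%nat -> (j < n)%nat -> i <> j ->
  mass_on n S (transfer v i j d) = mass_on n S v + (if S i then d else 0) - (if S j then d else 0).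
Proof.
  intros Hi Hj Hij. unfold mass_on.
  rewrite <- (rsum_delta n i (if S i then d else 0)), <- (rsum_delta n j (if S j then d else 0)) by auto.
  rewrite <- rsum_plus, <- rsum_minus. apply rsum_ext. intros k Hk. unfold transfer.
  destruct (Nat.eqb_spec k i); destruct (Nat.eqb_spec k j); subst; try lia; destruct (S _); ring.
Qed.

Fixpoint downhill (n : nat) (x : nat -> R) (l : list (nat * nat * R)) : Prop :=
  match l with
  | nil => True
  | (i, j, d) :: l' => (i < n)%nat /\ (j < n)%nat /\ i <> j /\ 0 < d /\ x i < x j /\ downhill n x l'
  end.

Fixpoint net_flow (l : list (nat * nat * R)) (k : nat) : R :=
  match l with
  | nil => 0
  | (i, j, d) :: l' => ((if Nat.eqb k i then d else 0) - (if Nat.eqb k j then d else 0)) + net_flow l' k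
  end.

(** Number of nonzero entries among the first [n]: the measure of the decomposition. *)
Fixpoint support_size (n : nat) (v : nat -> R) : nat :=
  match n with
  | O => O
  | S m => (support_size m v + (if Req_EM_T (v m) 0 then 0 else 1))%nat
  end.

Lemma support_size_lt n v v' : (forall k, (k < n)%nat -> v k = 0 -> v' k = 0) ->
  (exists k, (k < n)%nat /\ v k <> 0 /\ v' k = 0) -> (support_size n v' < support_size n v)%nat.
Proof.
  assert (Hle : forall m0, (forall k, (k < m0)%nat -> v k = 0 -> v' k = 0) ->
                 (support_size m0 v' <= support_size m0 v)%nat).
  { intros m0. induction m0 as [| m IH]; simpl; intros H; auto.
    specialize (IH ltac:(intros; apply H; auto; lia)).
    destruct (Req_EM_T (v m) 0) as [Hz | Hnz]; destruct (Req_EM_T (v' m) 0) as [Hz' | Hnz']; try lia.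
    exfalso. apply Hnz'. apply H; auto. }
  induction n; simpl; intros H [k [Hk [Hv Hv']]]; [lia |].
  destruct (Nat.eq_dec k n) as [-> | Hne].
  - pose proof (Hle n ltac:(intros; apply H; auto; lia)).
    destruct (Req_EM_T (v n) 0); [contradiction |]. destruct (Req_EM_T (v' n) 0); [lia | contradiction].
  - specialize (IHn ltac:(intros; apply H; auto; lia) ltac:(exists k; repeat split; auto; lia)).
    destruct (Req_EM_T (v n) 0) as [Hz | Hnz]; destruct (Req_EM_T (v' n) 0) as [Hz' | Hnz']; try lia.
    exfalso. apply Hnz'. apply H; auto.
Qed.

Definition no_upper_gain (n : nat) (x v : nat -> R) : Prop :=
  forall S, upper_set n x S -> mass_on n S v <= 0.

(** A nonzero balanced [v] without upper gain has a surplus state [i] of maximal weight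
    among the surplus states and a deficit state [j] of larger weight: otherwise the
    upper set [{x > x i} U {i}] would gain mass. *)
Lemma downhill_pair n x v : rsum n v = 0 -> no_upper_gain n x v -> (exists k, (k < n)%nat /\ v k <> 0) ->
  exists i j, (i < n)%nat /\ (j < n)%nat /\ 0 < v i /\ v j < 0 /\ x i < x j /\
              forall k, (k < n)%nat -> 0 < v k -> x k <= x i.
Proof.
  intros Hsum Hcut [k0 [Hk0 Hv0]].
  assert (Hpos : exists k, (k < n)%nat /\ 0 < v k).
  { apply NNPP. intros Hn.
    assert (Hlt : rsum n v < rsum n (fun _ => 0)); [| rewrite (rsum_zero n (fun _ => 0)) in Hlt by auto; lra].
    apply rsum_lt.
    - intros i Hi. apply Rnot_lt_le. intros Hl. apply Hn; eauto.
    - exists k0. split; auto. destruct (Rtotal_order (v k0) 0) as [| [|]]; [auto | contradiction |].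
      exfalso; apply Hn; eauto. }
  destruct (exists_argmax n (fun k => 0 < v k) x Hpos) as [i [Hi [Hvi Hmax]]].
  set (above := fun k => if Rlt_dec (x i) (x k) then true else false).
  set (S0 := fun k => orb (above k) (Nat.eqb k i)).
  assert (HS0 : upper_set n x S0).
  { intros a b Ha Hb HSa Hab. unfold S0, above in *. apply orb_true_iff in HSa. apply orb_true_iff. left.
    destruct (Rlt_dec (x i) (x b)); auto. exfalso.
    destruct HSa as [HSa | HSa]; [destruct (Rlt_dec (x i) (x a)); [lra | discriminate] |].
    apply Nat.eqb_eq in HSa. subst. lra. }
  assert (Hsplit : mass_on n S0 v = mass_on n above v + v i).
  { unfold mass_on. rewrite <- (rsum_delta n i (v i)), <- rsum_plus by auto.
    apply rsum_ext. intros k Hk. unfold S0, above.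
    destruct (Rlt_dec (x i) (x k)); destruct (Nat.eqb_spec k i); subst; simpl; try lra. }
  pose proof (Hcut S0 HS0) as Hcut0.
  destruct (rsum_neg_term n (fun k => if above k then v k else 0)) as [j [Hj Hvj]];
    [unfold mass_on in *; lra |].
  destruct (above j) eqn:Haj; [| lra].
  exists i, j. repeat split; auto. unfold above in Haj. destruct (Rlt_dec (x i) (x j)); [auto | discriminate].
Qed.

Lemma transfer_keeps_no_upper_gain n x v i j d :
  (i < n)%nat -> (j < n)%nat -> i <> j -> (forall k, (k < n)%nat -> 0 < v k -> x k <= x i) ->
  x i < x j -> 0 <= d -> d <= v i -> d <= - v j ->
  no_upper_gain n x v -> no_upper_gain n x (transfer v j i d).
Proof.
  intros Hi Hj Hij Hmax Hxij Hd Hdi Hdj Hcut S HS.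
  rewrite mass_on_transfer by auto. pose proof (Hcut S HS).
  destruct (S j) eqn:ESj; [| destruct (S i); lra].
  destruct (S i) eqn:ESi; [lra |].
  destruct (classic (exists k, (k < n)%nat /\ S k = true /\ x k <= x i)) as [[k [Hk [HSk Hxk]]] | Hno].
  - (* [S] reaches down to the weight of [i], so [S U {i}] is still an upper set. *)
    assert (Hxk' : x k = x i).
    { destruct (Rle_lt_or_eq_dec _ _ Hxk) as [Hl |]; auto.
      rewrite (HS k i Hk Hi HSk Hl) in ESi. discriminate. }
    set (S' := fun m => orb (S m) (Nat.eqb m i)).
    assert (HS' : upper_set n x S').
    { intros a b Ha Hb HSa Hab. unfold S' in *. apply orb_true_iff in HSa. apply orb_true_iff. left.
      destruct HSa as [HSa | HSa]; [apply (HS a b Ha Hb HSa Hab) |].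
      apply Nat.eqb_eq in HSa; subst. apply (HS k b Hk Hb HSk). lra. }
    assert (mass_on n S' v = mass_on n S v + v i).
    { unfold mass_on. rewrite <- (rsum_delta n i (v i)), <- rsum_plus by auto.
      apply rsum_ext. intros m Hm. unfold S'. destruct (Nat.eqb_spec m i).
      - subst. rewrite ESi; simpl; ring.
      - rewrite orb_false_r. destruct (S m); ring. }
    pose proof (Hcut S' HS'). lra.
  - (* All of [S] lies strictly above [i], hence carries no surplus. *)
    assert (mass_on n S v <= v j); [| lra].
    unfold mass_on. rewrite <- (rsum_delta n j (v j)) by auto. apply rsum_le. intros m Hm.
    destruct (Nat.eqb_spec m j); [subst; rewrite ESj; lra |].
    destruct (S m) eqn:ESm; [| lra]. apply Rnot_lt_le. intros Hl.
    apply Hno. exists m. repeat split; auto.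
Qed.

Lemma downhill_decomposition n x v : rsum n v = 0 -> no_upper_gain n x v ->
  exists l, downhill n x l /\ forall k, (k < n)%nat -> v k = net_flow l k.
Proof.
  remember (support_size n v) as N eqn:HN. assert (Hsz : (support_size n v <= N)%nat) by lia. clear HN.
  revert v Hsz. induction N; intros v Hsz Hsum Hcut;
    (destruct (classic (exists k, (k < n)%nat /\ v k <> 0)) as [Hnz | Hz];
     [| exists nil; split; [simpl; auto | intros k Hk; simpl; apply NNPP; intros Hn; apply Hz; eauto]]).
  - destruct (downhill_pair n x v Hsum Hcut Hnz) as [i [j [Hi [Hj [Hvi [Hvj [Hxij _]]]]]]].
    assert (Hle : (0 < support_size n v)%nat); [| lia].
    apply Nat.le_lt_trans with (support_size n (fun _ => 0)); [lia |].
    apply support_size_lt; auto. exists i. split; [| split]; auto; lra.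
  - destruct (downhill_pair n x v Hsum Hcut Hnz) as [i [j [Hi [Hj [Hvi [Hvj [Hxij Hmax]]]]]]].
    assert (Hij : i <> j) by (intros ->; lra).
    set (d := Rmin (v i) (- v j)).
    assert (Hd : 0 < d) by (apply Rmin_glb_lt; lra).
    assert (Hdi : d <= v i) by apply Rmin_l. assert (Hdj : d <= - v j) by apply Rmin_r.
    set (v' := transfer v j i d).
    assert (Hsz' : (support_size n v' < support_size n v)%nat).
    { apply support_size_lt.
      - intros k Hk Hvk. unfold v', transfer.
        destruct (Nat.eqb_spec k j); [subst; lra |]. destruct (Nat.eqb_spec k i); [subst; lra | lra].
      - unfold d, Rmin in v'. destruct (Rle_dec (v i) (- v j)).
        + exists i. repeat split; auto; try lra. unfold v', transfer. rewrite Nat.eqb_refl.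
          destruct (Nat.eqb_spec i j); [contradiction | ring].
        + exists j. repeat split; auto; try lra. unfold v', transfer. rewrite Nat.eqb_refl.
          destruct (Nat.eqb_spec j i); [subst; contradiction | ring]. }
    destruct (IHN v') as [l [Hl Hlv]]; [lia | unfold v'; rewrite rsum_transfer; auto |
      apply transfer_keeps_no_upper_gain; auto; lra |].
    exists ((i, j, d) :: l). split; [simpl; repeat split; auto |].
    intros k Hk. simpl. rewrite <- Hlv by auto. unfold v', transfer. ring.
Qed.

(** ** Two-state Markov chains realise small downhill transfers *)

(** Rates that only exchange mass between [i] and [j], in detailed balance with [Ps]. *)
Definition pair_rates (Ps : nat -> R) (i j : nat) (c : R) : nat -> nat -> R :=
  fun a b => if andb (Nat.eqb a i) (Nat.eqb b j) then c * Ps i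
             else if andb (Nat.eqb a j) (Nat.eqb b i) then c * Ps j else 0.

Section PairChain.

Variables (n : nat) (Ps : nat -> R) (i j : nat) (c : R).
Hypotheses (Hi : (i < n)%nat) (Hj : (j < n)%nat) (Hij : i <> j).

Let q := pair_rates Ps i j c.

Lemma pair_rates_ij : q i j = c * Ps i.
Proof. unfold q, pair_rates. rewrite !Nat.eqb_refl. reflexivity. Qed.

Lemma pair_rates_ji : q j i = c * Ps j.
Proof. unfold q, pair_rates. rewrite !Nat.eqb_refl. destruct (Nat.eqb_spec j i); [lia | reflexivity]. Qed.

Lemma pair_rates_other a b : ~ (a = i /\ b = j) -> ~ (a = j /\ b = i) -> q a b = 0.
Proof.
  intros H1 H2. unfold q, pair_rates.
  destruct (Nat.eqb_spec a i); destruct (Nat.eqb_spec b j); simpl;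
  destruct (Nat.eqb_spec a j); destruct (Nat.eqb_spec b i); simpl; subst; tauto.
Qed.

Lemma pair_rates_chain : 0 <= c -> 0 <= Ps i -> 0 <= Ps j -> markov_chain n Ps q.
Proof.
  intros Hc Hpi Hpj. split.
  - intros a b _ _ _. unfold q, pair_rates. destruct (_ && _); [nra |]. destruct (_ && _); [nra | lra].
  - intros a Ha. destruct (Nat.eq_dec a i) as [-> | Hai]; [| destruct (Nat.eq_dec a j) as [-> | Haj]].
    + rewrite (rsum_ne_single n i j (c * Ps i * Ps j)), (rsum_ne_single n i j (c * Ps j)); auto.
      * ring.
      * intros k _ Hk1 Hk2. apply pair_rates_other; lia.
      * apply pair_rates_ji.
      * intros k _ Hk1 Hk2. rewrite pair_rates_other; [ring | lia | lia].
      * rewrite pair_rates_ij. ring.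
    + rewrite (rsum_ne_single n j i (c * Ps j * Ps i)), (rsum_ne_single n j i (c * Ps i)); auto.
      * ring.
      * intros k _ Hk1 Hk2. apply pair_rates_other; lia.
      * apply pair_rates_ij.
      * intros k _ Hk1 Hk2. rewrite pair_rates_other; [ring | lia | lia].
      * rewrite pair_rates_ji. ring.
    + unfold rsum_ne. rewrite !rsum_zero; [lra | |]; intros k _; destruct (_ =? _)%nat; auto.
      * apply pair_rates_other; lia.
      * rewrite pair_rates_other; [ring | lia | lia].
Qed.

Lemma pair_field Y k : (k < n)%nat ->
  kolmogorov_field n q Y k =
  ((if Nat.eqb k i then 1 else 0) - (if Nat.eqb k j then 1 else 0)) * (c * (Ps i * Y j - Ps j * Y i)).
Proof.
  intros Hk. unfold kolmogorov_field. destruct (Nat.eq_dec k i) as [-> | Hki].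
  - rewrite Nat.eqb_refl. destruct (Nat.eqb_spec i j); [lia |].
    apply (rsum_ne_single n i j); auto.
    + intros a _ H1 H2. rewrite !pair_rates_other by lia. ring.
    + rewrite pair_rates_ij, pair_rates_ji. ring.
  - destruct (Nat.eqb_spec k i); [lia |]. destruct (Nat.eq_dec k j) as [-> | Hkj].
    + rewrite Nat.eqb_refl. apply (rsum_ne_single n j i); auto.
      * intros a _ H1 H2. rewrite !pair_rates_other by lia. ring.
      * rewrite pair_rates_ij, pair_rates_ji. ring.
    + destruct (Nat.eqb_spec k j); [lia |]. unfold rsum_ne. rewrite rsum_zero; [ring |].
      intros a _. destruct (_ =? _)%nat; auto. rewrite !pair_rates_other by lia. ring.
Qed.

Lemma pair_solution P (u : R -> R) :
  (forall t, derivable_pt_lim u t (c * (Ps i * (P j - u t) - Ps j * (P i + u t)))) ->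
  kolmogorov_solution n q (fun t => transfer P i j (u t)).
Proof.
  intros Hu k Hk t. cbv beta.
  change (rsum_ne n k (fun b => q k b * transfer P i j (u t) b - q b k * transfer P i j (u t) k))
    with (kolmogorov_field n q (transfer P i j (u t)) k).
  rewrite pair_field by auto.
  set (w := (if Nat.eqb k i then 1 else 0) - (if Nat.eqb k j then 1 else 0)).
  replace (fun s => transfer P i j (u s) k) with (fun s => P k + w * u s).
  2:{ apply functional_extensionality. intros s. unfold transfer, w.
      destruct (k =? i)%nat; destruct (k =? j)%nat; ring. }
  replace (w * (c * (Ps i * transfer P i j (u t) j - Ps j * transfer P i j (u t) i)))
    with (0 + w * (c * (Ps i * (P j - u t) - Ps j * (P i + u t)))).
  - apply derivable_pt_lim_plus; [apply derivable_pt_lim_const |].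
    apply (derivable_pt_lim_scal u w t), Hu.
  - unfold transfer. rewrite !Nat.eqb_refl.
    destruct (Nat.eqb_spec j i); [lia |]. destruct (Nat.eqb_spec i j); [lia |]. ring.
Qed.

End PairChain.

Lemma relaxation_derivative A kappa t :
  derivable_pt_lim (fun s => A * (1 - exp (- kappa * s))) t (A * kappa * exp (- kappa * t)).
Proof. apply is_derive_Reals. auto_derive; [auto | ring]. Qed.

(** Running the pair chain [i <-> j] at a suitable rate for unit time moves the fraction
    [theta] of the distance to the [i]-[j] equilibrium, for every [0 < theta < 1]. *)
Lemma pair_step n Ps P i j theta : (i < n)%nat -> (j < n)%nat -> i <> j ->
  0 < Ps i -> 0 < Ps j -> 0 < theta < 1 ->
  markov_step n Ps P (transfer P i j (theta * ((Ps i * P j - Ps j * P i) / (Ps i + Ps j)))).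
Proof.
  intros Hi Hj Hij Hpi Hpj Hth.
  set (sigma := Ps i + Ps j). set (A := (Ps i * P j - Ps j * P i) / sigma).
  set (kappa := - ln (1 - theta)).
  assert (Hkappa : 0 < kappa).
  { unfold kappa. assert (ln (1 - theta) < 0); [rewrite <- ln_1; apply ln_increasing; lra | lra]. }
  set (u := fun s => A * (1 - exp (- kappa * s))).
  exists (pair_rates Ps i j (kappa / sigma)). split.
  { apply pair_rates_chain; auto; [apply Rlt_le, Rdiv_lt_0_compat | |]; unfold sigma; lra. }
  exists (fun t => transfer P i j (u t)). split; [| split].
  - apply pair_solution; auto. intros t.
    replace (kappa / sigma * (Ps i * (P j - u t) - Ps j * (P i + u t)))
      with (A * kappa * exp (- kappa * t)) by (unfold u, A, sigma; field; lra).
    apply relaxation_derivative.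
  - intros k _. unfold u, transfer. rewrite Rmult_0_r, exp_0. destruct (k =? i)%nat; destruct (k =? j)%nat; ring.
  - intros k _. unfold u. f_equal.
    replace (exp (- kappa * 1)) with (1 - theta); [unfold A; ring |].
    unfold kappa. replace (- - ln (1 - theta) * 1) with (ln (1 - theta)) by ring. rewrite exp_ln; lra.
Qed.

(** ** From the divergence order to the Markov order *)

Lemma markov_step_refl n Ps P : markov_step n Ps P P.
Proof.
  exists (fun _ _ => 0). split.
  - split; [intros; lra |]. intros i Hi. unfold rsum_ne.
    rewrite !rsum_zero; [lra | |]; intros; destruct (_ =? _)%nat; lra.
  - exists (fun _ => P). split; [| split; intros ? ?; auto].
    intros i Hi t. replace (rsum_ne n i (fun j => 0 * P j - 0 * P i)) with 0.
    + apply derivable_pt_lim_const.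
    + unfold rsum_ne. rewrite rsum_zero; auto. intros; destruct (_ =? _)%nat; lra.
Qed.

Lemma markov_step_order n Ps a b :
  in_pos_simplex n a -> in_pos_simplex n b -> markov_step n Ps a b -> markov_order n Ps a b.
Proof. intros Ha Hb Hs. split; [auto | split; [auto |]]. intros Rl H _ _. apply H; auto. Qed.

Lemma markov_order_trans n Ps a b c :
  markov_order n Ps a b -> markov_order n Ps b c -> markov_order n Ps a c.
Proof.
  intros [Ha [_ H1]] [_ [Hc H2]]. split; [auto | split; [auto |]]. intros Rl Hs Ht Hcl.
  apply (Ht a b c); [apply H1 | apply H2]; auto.
Qed.

(** How far [P] is, on the pair [i, j], from the two-state equilibrium proportional to [Ps]. *)
Definition gap (Ps P : nat -> R) (i j : nat) : R := Ps i * P j - Ps j * P i.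

Lemma transfer_order n Ps P i j d : (forall k, (k < n)%nat -> 0 < Ps k) -> in_pos_simplex n P ->
  (i < n)%nat -> (j < n)%nat -> i <> j -> 0 < d -> d * (Ps i + Ps j) < gap Ps P i j ->
  in_pos_simplex n (transfer P i j d) /\ markov_order n Ps P (transfer P i j d).
Proof.
  intros HPs [HP HP1] Hi Hj Hij Hd Hlt. unfold gap in Hlt.
  pose proof (HPs i Hi). pose proof (HPs j Hj). pose proof (HP i Hi). pose proof (HP j Hj).
  assert (Hsimplex : in_pos_simplex n (transfer P i j d)).
  { split; [| rewrite rsum_transfer; auto].
    assert (Hdj : d < P j) by nra.
    intros k Hk. specialize (HP k Hk). unfold transfer.
    destruct (Nat.eqb_spec k i); destruct (Nat.eqb_spec k j); try subst k; try lia; lra. }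
  split; auto. apply markov_step_order; auto; [split; auto |].
  set (D0 := Ps i * P j - Ps j * P i) in *. assert (HD0 : 0 < D0) by nra.
  replace (transfer P i j d) with (transfer P i j (d * (Ps i + Ps j) / D0 * (D0 / (Ps i + Ps j))))
    by (f_equal; field; lra).
  apply pair_step; auto. split; [apply Rdiv_lt_0_compat; nra |].
  apply Rmult_lt_reg_r with D0; [lra |]. unfold Rdiv. rewrite Rmult_assoc, Rinv_l; lra.
Qed.

Fixpoint total_flow (l : list (nat * nat * R)) : R :=
  match l with nil => 0 | (_, _, d) :: l' => d + total_flow l' end.

Fixpoint gaps_above (Ps P : nat -> R) (m : R) (l : list (nat * nat * R)) : Prop :=
  match l with nil => True | (i, j, _) :: l' => gap Ps P i j > m /\ gaps_above Ps P m l' end.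

Lemma total_flow_nonneg n x l : downhill n x l -> 0 <= total_flow l.
Proof.
  induction l as [| [[i j] d] l IH]; simpl; intros Hl; [lra |].
  destruct Hl as [_ [_ [_ [Hd [_ Hl]]]]]. specialize (IH Hl). lra.
Qed.

Lemma gaps_above_mono Ps P m1 m2 l : m1 <= m2 -> gaps_above Ps P m2 l -> gaps_above Ps P m1 l.
Proof. induction l as [| [[i j] d] l IH]; simpl; auto. intros Hm [H1 H2]. split; [lra | auto]. Qed.

Lemma Rabs_le_inv a b : Rabs a <= b -> - b <= a <= b.
Proof. unfold Rabs; destruct Rcase_abs; lra. Qed.

Lemma gaps_above_perturb n Ps x P P' m e l : downhill n x l ->
  (forall k, (k < n)%nat -> 0 <= Ps k <= 1) ->
  (forall k, (k < n)%nat -> Rabs (P' k - P k) <= e) ->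
  gaps_above Ps P m l -> gaps_above Ps P' (m - 2 * e) l.
Proof.
  intros Hl HPs Hd. induction l as [| [[i j] d] l IH]; simpl; auto.
  destruct Hl as [Hi [Hj [_ [_ [_ Hl]]]]]. intros [H1 H2]. split; auto. unfold gap in *.
  pose proof (HPs i Hi). pose proof (HPs j Hj).
  pose proof (Rabs_le_inv _ _ (Hd i Hi)). pose proof (Rabs_le_inv _ _ (Hd j Hj)).
  assert (Ps i * (P' j - P j) >= - e) by nra. assert (Ps j * (P' i - P i) <= e) by nra. nra.
Qed.

Lemma transfer_close P i j d k : i <> j -> 0 <= d -> Rabs (transfer P i j d k - P k) <= d.
Proof.
  intros Hij Hd. unfold transfer. apply Rabs_le.
  destruct (Nat.eqb_spec k i); destruct (Nat.eqb_spec k j); try (subst; lia); lra.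
Qed.

Lemma downhill_chain_order n Ps x : (forall k, (k < n)%nat -> 0 < Ps k) -> rsum n Ps = 1 ->
  forall l, downhill n x l -> forall P e, in_pos_simplex n P -> 0 < e ->
  gaps_above Ps P (2 * e * total_flow l) l -> markov_order n Ps P (fun k => P k + e * net_flow l k).
Proof.
  intros HPs HPs1 l. induction l as [| [[i j] d] l IH]; intros Hl P e HP He Hgaps.
  - replace (fun k => P k + e * net_flow nil k) with P
      by (apply functional_extensionality; intros; simpl; ring).
    apply markov_step_order, markov_step_refl; auto.
  - pose proof Hl as Hl0. destruct Hl as [Hi [Hj [Hij [Hd [_ Hl]]]]]. destruct Hgaps as [Hgap Hgaps].
    simpl total_flow in *. pose proof (total_flow_nonneg n x l Hl).
    assert (HPs01 : forall k, (k < n)%nat -> 0 <= Ps k <= 1).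
    { intros k Hk. split; [left; auto |]. rewrite <- HPs1. apply rsum_one; auto. intros; left; auto. }
    assert (Hsigma : Ps i + Ps j <= 1)
      by (rewrite <- HPs1; apply rsum_two; auto; intros; left; apply HPs; auto).
    pose proof (HPs i Hi); pose proof (HPs j Hj).
    destruct (transfer_order n Ps P i j (e * d) HPs HP Hi Hj Hij ltac:(nra)) as [HP' Hstep].
    { assert (e * d * (Ps i + Ps j) <= e * d) by (assert (0 < e * d) by nra; nra).
      assert (e * d < 2 * e * (d + total_flow l)) by nra. lra. }
    pose proof (gaps_above_perturb n Ps x P (transfer P i j (e * d)) _ (e * d) l Hl HPs01
      (fun k _ => transfer_close P i j (e * d) k Hij ltac:(nra)) Hgaps) as Hgaps'.
    replace (2 * e * (d + total_flow l) - 2 * (e * d)) with (2 * e * total_flow l) in Hgaps' by ring.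
    replace (fun k => P k + e * net_flow ((i, j, d) :: l) k)
      with (fun k => transfer P i j (e * d) k + e * net_flow l k).
    + apply markov_order_trans with (transfer P i j (e * d)); auto.
    + apply functional_extensionality; intros k. unfold transfer. simpl.
      destruct (k =? i)%nat; destruct (k =? j)%nat; ring.
Qed.

Lemma downhill_gaps_positive n Ps P0 l : (forall k, (k < n)%nat -> 0 < Ps k) ->
  downhill n (fun i => P0 i / Ps i) l -> exists m, m > 0 /\ gaps_above Ps P0 m l.
Proof.
  intros HPs. induction l as [| [[i j] d] l IH]; simpl; intros Hl; [exists 1; split; auto; lra |].
  destruct Hl as [Hi [Hj [_ [_ [Hx Hl]]]]]. destruct (IH Hl) as [m [Hm Hgaps]].
  pose proof (HPs i Hi); pose proof (HPs j Hj).
  assert (HD : 0 < gap Ps P0 i j).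
  { unfold gap. apply Rmult_lt_compat_r with (r := Ps i * Ps j) in Hx; [| nra].
    replace (P0 i / Ps i * (Ps i * Ps j)) with (Ps j * P0 i) in Hx by (field; lra).
    replace (P0 j / Ps j * (Ps i * Ps j)) with (Ps i * P0 j) in Hx by (field; lra). lra. }
  exists (Rmin m (gap Ps P0 i j / 2)). split; [apply Rmin_glb_lt; lra |].
  split; [pose proof (Rmin_r m (gap Ps P0 i j / 2)); lra |].
  apply gaps_above_mono with m; auto. apply Rmin_l.
Qed.

Lemma H_order_markov_toward n Ps P0 P1 : (forall k, (k < n)%nat -> 0 < Ps k) -> rsum n Ps = 1 ->
  in_pos_simplex n P0 -> in_pos_simplex n P1 -> H_order n Ps P0 P1 ->
  exists P2 e, markov_order n Ps P0 P2 /\ 0 < e <= 1 /\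
               forall k, (k < n)%nat -> P2 k = P0 k + e * (P1 k - P0 k).
Proof.
  intros HPs HPs1 HP0 HP1 HH.
  destruct (downhill_decomposition n (fun i => P0 i / Ps i) (fun k => P1 k - P0 k)) as [l [Hl Hflow]].
  { rewrite rsum_minus, (proj2 HP0), (proj2 HP1). ring. }
  { intros S HS. apply (H_order_upper_sets n Ps P0 P1 S HPs HH HS). }
  destruct (downhill_gaps_positive n Ps P0 l HPs Hl) as [m [Hm Hgaps]].
  pose proof (total_flow_nonneg n _ l Hl) as Hflow0.
  set (e := Rmin 1 (m / (2 * total_flow l + 1))).
  assert (He : 0 < e) by (apply Rmin_glb_lt; [lra | apply Rdiv_lt_0_compat; lra]).
  assert (He1 : e <= 1) by apply Rmin_l.
  assert (Hem : 2 * e * total_flow l <= m).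
  { pose proof (Rmin_r 1 (m / (2 * total_flow l + 1))) as Hem'. fold e in Hem'.
    pose proof (mul_frac_lt (2 * total_flow l) m ltac:(lra) Hm).
    assert (2 * total_flow l * e <= 2 * total_flow l * (m / (2 * total_flow l + 1)))
      by (apply Rmult_le_compat_l; lra). lra. }
  exists (fun k => P0 k + e * net_flow l k), e. split; [| split; [lra |]].
  - apply (downhill_chain_order n Ps _ HPs HPs1 l Hl); auto. apply gaps_above_mono with m; auto.
  - intros k Hk. rewrite <- Hflow by auto. reflexivity.
Qed.

(** ** Minimal elements on convex condition sets *)

(** [S] is convex and only depends on the coordinates below [n]. *)
Definition convex_on (n : nat) (S : (nat -> R) -> Prop) : Prop :=
  forall P0 P1 Q e, S P0 -> S P1 -> 0 <= e <= 1 ->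
    (forall k, (k < n)%nat -> Q k = P0 k + e * (P1 k - P0 k)) -> S Q.

Lemma not_veq_witness n P Q : ~ veq n P Q -> exists i, (i < n)%nat /\ P i <> Q i.
Proof.
  intros H. apply NNPP. intros Hn. apply H. intros i Hi. apply NNPP. intros Hne. apply Hn. eauto.
Qed.

(** A Markov-minimal point is H-minimal: a point [P1] strictly H-below [P0] would give,
    by (B), a convex combination of [P0] and [P1] strictly Markov-below [P0]. *)
Lemma markov_minimal_H_minimal n Ps S P0 : (forall k, (k < n)%nat -> 0 < Ps k) -> rsum n Ps = 1 ->
  convex_on n S -> (forall P, S P -> in_pos_simplex n P) ->
  minimal_in n S (markov_order n Ps) P0 -> minimal_in n S (H_order n Ps) P0.
Proof.
  intros HPs HPs1 Hconv Hsimplex [HS0 Hmin]. split; auto. intros [P1 [HS1 [Hne HH]]]. apply Hmin.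
  destruct (H_order_markov_toward n Ps P0 P1 HPs HPs1 (Hsimplex P0 HS0) (Hsimplex P1 HS1) HH)
    as [P2 [e [HM [He HP2]]]].
  exists P2. split; [apply (Hconv P0 P1 P2 e); auto; lra | split; auto].
  intros Hv. apply Hne. intros i Hi. specialize (Hv i Hi). rewrite HP2 in Hv by auto.
  assert (Hprod : e * (P1 i - P0 i) = 0) by lra. apply Rmult_integral in Hprod. lra.
Qed.

Lemma f_div_midpoint_lt n Ps h P0 P1 : (forall k, (k < n)%nat -> 0 < Ps k) -> strictly_convex_pos h ->
  (forall k, (k < n)%nat -> 0 < P0 k) -> (forall k, (k < n)%nat -> 0 < P1 k) -> ~ veq n P1 P0 ->
  f_div n h (fun k => (P0 k + P1 k) / 2) Ps < (f_div n h P0 Ps + f_div n h P1 Ps) / 2.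
Proof.
  intros HPs Hh HP0 HP1 Hne. unfold f_div.
  replace ((rsum n (fun i => Ps i * h (P0 i / Ps i)) + rsum n (fun i => Ps i * h (P1 i / Ps i))) / 2)
    with (rsum n (fun i => / 2 * (Ps i * h (P0 i / Ps i) + Ps i * h (P1 i / Ps i))))
    by (rewrite rsum_scal, rsum_plus; field).
  assert (Hpoint : forall i, (i < n)%nat -> P0 i / Ps i <> P1 i / Ps i ->
            Ps i * h ((P0 i + P1 i) / 2 / Ps i) < / 2 * (Ps i * h (P0 i / Ps i) + Ps i * h (P1 i / Ps i))).
  { intros i Hi E. pose proof (HPs i Hi). pose proof (HP0 i Hi). pose proof (HP1 i Hi).
    replace ((P0 i + P1 i) / 2 / Ps i) with (/ 2 * (P0 i / Ps i) + (1 - / 2) * (P1 i / Ps i)) by (field; lra).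
    pose proof (Hh (P0 i / Ps i) (P1 i / Ps i) (/ 2) ltac:(apply Rdiv_lt_0_compat; lra)
                  ltac:(apply Rdiv_lt_0_compat; lra) E ltac:(lra)). nra. }
  apply rsum_lt.
  - intros i Hi. destruct (Req_dec (P0 i / Ps i) (P1 i / Ps i)) as [E | E]; [| left; apply Hpoint; auto].
    replace ((P0 i + P1 i) / 2 / Ps i) with (P1 i / Ps i) by (pose proof (HPs i Hi); unfold Rdiv in *; lra).
    rewrite E. lra.
  - destruct (not_veq_witness n P1 P0 Hne) as [i [Hi Hne0]]. exists i. split; auto. apply Hpoint; auto.
    intros E. apply Hne0. pose proof (HPs i Hi). apply (Rmult_eq_reg_r (/ Ps i)); [| apply Rinv_neq_0_compat; lra].
    unfold Rdiv in E. lra.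
Qed.

(** An H-minimal point is Markov-minimal: if [P0] is Markov-above [P1 <> P0], then by
    (A) and strict convexity [P0] is strictly H-above their midpoint. *)
Lemma H_minimal_markov_minimal n Ps S P0 : (forall k, (k < n)%nat -> 0 < Ps k) -> convex_on n S ->
  minimal_in n S (H_order n Ps) P0 -> minimal_in n S (markov_order n Ps) P0.
Proof.
  intros HPs Hconv [HS0 Hmin]. split; auto. intros [P1 [HS1 [Hne HM]]]. apply Hmin.
  pose proof HM as [[HP0 _] [[HP1 _] _]].
  exists (fun k => (P0 k + P1 k) / 2). split; [| split].
  - apply (Hconv P0 P1 _ (/ 2)); auto; [lra | intros; field].
  - intros Hv. apply Hne. intros i Hi. specialize (Hv i Hi). simpl in Hv. lra.
  - intros h Hh. pose proof (markov_order_f_div_mono n Ps P0 P1 h HPs HM Hh).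
    pose proof (f_div_midpoint_lt n Ps h P0 P1 HPs Hh HP0 HP1 Hne). lra.
Qed.

Lemma condition_set_convex n k m M :
  convex_on n (fun P => in_L n k m M P /\ in_pos_simplex n P).
Proof.
  intros P0 P1 Q e [HL0 [HP0 HS0]] [HL1 [HP1 HS1]] He HQ. split; [| split].
  - intros r Hr. rewrite (rsum_ext n _ (fun j => m r j * P0 j + e * (m r j * P1 j - m r j * P0 j)))
      by (intros j Hj; rewrite HQ by auto; ring).
    rewrite rsum_plus, rsum_scal, rsum_minus, HL0, HL1 by auto. ring.
  - intros i Hi. rewrite HQ by auto. specialize (HP0 i Hi). specialize (HP1 i Hi). nra.
  - rewrite (rsum_ext n Q (fun j => P0 j + e * (P1 j - P0 j))) by auto.
    rewrite rsum_plus, rsum_scal, rsum_minus, HS0, HS1. ring.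
Qed.

Theorem corollary2 (n : nat) (Ps : nat -> R) (k : nat)
    (m : nat -> nat -> R) (M : nat -> R) :
  (2 <= n)%nat ->
  in_pos_simplex n Ps ->
  (forall j, (j < n)%nat -> m 0%nat j = 1) ->
  M 0%nat = 1 ->
  (exists P, in_L n k m M P /\ in_pos_simplex n P) ->
  forall P0 : nat -> R,
    minimal_in n (fun P => in_L n k m M P /\ in_pos_simplex n P) (markov_order n Ps) P0 <->
    minimal_in n (fun P => in_L n k m M P /\ in_pos_simplex n P) (H_order n Ps) P0.
Proof.
  intros _ [HPs HPs1] _ _ _ P0. split.
  - apply markov_minimal_H_minimal; auto; [apply condition_set_convex | intros P [_ HP]; exact HP].
  - apply H_minimal_markov_minimal; auto. apply condition_set_convex.
Qed.
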